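(* Assume the setting of the context and fix $\Delta=(h,\Delta x)$. If $\mathbf{U}=(U_{\cdot,1},U_{\cdot,2}),\mathbf{V}=(V_{\cdot,1},V_{\cdot,2})\in B(\mathcal{A}^{\Delta x})^2$ are respectively a bounded subsolution and a bounded supersolution of the scheme, i.e. $$\mathcal{F}^\Delta_j\big(x_i,(U_{i,j},U_{i,\bar\jmath}),U_{\cdot,j}\big)\le0\quad\text{and}\quad\mathcal{F}^\Delta_j\big(x_i,(V_{i,j},V_{i,\bar\jmath}),V_{\cdot,j}\big)\ge0\qquad\forall i\in\mathbb{N},\ j=1,2,$$ then $U_{i,j}\le V_{i,j}$ for all $i\in\mathbb{N}$ and $j=1,2$.
   Context: Constants: $\rho>0$, $r<\rho$, $0<y_1<y_2$, $\gamma>1$, $\underline{x}\le0$ with $\rho\underline{x}+y_j>0$, $\lambda_1,\lambda_2\ge0$; $\bar\jmath=3-j$; $u(c)=\frac{c^{1-\gamma}}{1-\gamma}$ for $c>0$, $u(0)=-\infty$. Discretization $\Delta=(h,\Delta x)$ with $h,\Delta x>0$, $\rho h<1$, $\lambda_jh<1$. Grid $x_i=\underline{x}+i\Delta x$, $i\in\mathbb{N}=\{0,1,\dots\}$, $\mathcal{A}^{\Delta x}=\{x_i\}$; $B(\mathcal{A}^{\Delta x})$ = bounded real sequences indexed by $\mathbb{N}$. $\beta_k(x)=\max\{0,1-|x-x_k|/\Delta x\}$ for $x\ge\underline{x}$. Admissible controls $\mathcal{C}^\Delta_j(x_i)=\{c\ge0:x_i+h(rx_i+y_j-c)\ge\underline{x}\}$,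 $s_{i,j}(c)=rx_i+y_j-c$. Scheme: $$\mathcal{F}^\Delta_j(x_i,(\mathsf{q}_j,\mathsf{q}_{\bar\jmath}),\mathsf{U})=\rho\mathsf{q}_j-(1-\rho h)\lambda_j(\mathsf{q}_{\bar\jmath}-\mathsf{q}_j)-\sup_{c\in\mathcal{C}^\Delta_j(x_i)}\Big\{u(c)+\frac{(1-\rho h)(1-\lambda_jh)}{h}\Big(\sum_k\beta_k(x_i+hs_{i,j}(c))\mathsf{U}_k-\mathsf{q}_j\Big)\Big\}.$$ *)

From HB Require Import structures.
From mathcomp Require Import all_boot all_order all_algebra.
From mathcomp Require Import all_classical all_reals all_analysis.
Set Implicit Arguments. Unset Strict Implicit. Unset Printing Implicit Defensive.
Import Order.TTheory GRing.Theory Num.Theory.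
Import numFieldNormedType.Exports.
Local Open Scope classical_set_scope.
Local Open Scope ring_scope.

Section Scheme.
Context {R : realType}.

Definition gridx (xl dx : R) (i : nat) : R := xl + i%:R * dx.

Definition beta (xl dx : R) (k : nat) (x : R) : R :=
  Num.max 0 (1 - `|x - gridx xl dx k| / dx).

(* sum_k beta_k(z) U_k, as the limit of the partial sums (finitely many nonzero terms) *)
Definition interp (xl dx : R) (U : nat -> R) (z : R) : R :=
  limn (series (fun k => beta xl dx k z * U k) : R^nat).

Definition util (gamma c : R) : \bar R :=
  if c > 0 then ((c `^ (1 - gamma)) / (1 - gamma))%:E else -oo%E.

Definition admissible (xl h r y xi : R) : set R :=
  [set c | 0 <= c /\ xl <= xi + h * (r * xi + y - c)].

(* the scheme F^Delta_j(x_i, (qj, qjbar), U); y = y_j, lam = lambda_j *)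
Definition schemeF (rho r gamma xl h dx y lam : R)
  (xi qj qjb : R) (U : nat -> R) : \bar R :=
  ((rho * qj - (1 - rho * h) * lam * (qjb - qj))%:E -
   ereal_sup [set (util gamma c +
       (((1 - rho * h) * (1 - lam * h) / h) *
          (interp xl dx U (xi + h * (r * xi + y - c)) - qj))%:E)%E
     | c in admissible xl h r y xi])%E.

Definition bounded_seq (U : nat -> R) : Prop := exists M : R, forall i, `|U i| <= M.

End Scheme.

From HB Require Import structures.
From mathcomp Require Import all_boot all_order all_algebra.
From mathcomp Require Import all_classical all_reals all_analysis.
From mathcomp Require Import ring lra.
Set Implicit Arguments. Unset Strict Implicit. Unset Printing Implicit Defensive.
Import Order.TTheory GRing.Theory Num.Theory.
Local Open Scope ring_scope.

(* The scheme is monotone, and because the hat weights sum to at most one,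
   raising the data U, U_jbar by a constant M >= 0 raises the supremum over
   controls by at most b M, where a and b are the coefficients of U_jbar and
   of the interpolated value.  Comparing a subsolution with a supersolution at
   a point therefore gives (rho + a + b) (U - V) <= (a + b) M for every
   M >= 0 bounding U - V.  Hence M = sup (U - V) satisfies M <= theta M with
   theta < 1 (as rho > 0), and M <= 0. *)

Section HatFunctions.
Variables (R : realType) (dx : R).
Hypothesis dx_gt0 : 0 < dx.

Definition ramp (t : R) : R := Num.min dx (Num.max 0 t).

Lemma ramp_ge0 t : 0 <= ramp t.
Proof. by rewrite /ramp le_min (ltW dx_gt0) le_max lexx. Qed.

Lemma ramp_le t : ramp t <= dx.
Proof. by rewrite /ramp ge_min lexx. Qed.

Lemma tent_ramp w : Num.max 0 (dx - `|w|) = ramp (w + dx) - ramp w.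
Proof.
rewrite /ramp.
have [w_ge0|w_lt0] := leP 0 w; [rewrite ger0_norm | rewrite ltr0_norm] => //;
  rewrite !maxEle; repeat case: leP => ?; rewrite ?minEle; repeat case: leP => ?; lra.
Qed.

Lemma beta_ge0 xl k z : 0 <= beta xl dx k z.
Proof. by rewrite /beta le_max lexx. Qed.

Lemma gridxS xl k : gridx xl dx k.+1 = gridx xl dx k + dx.
Proof. by rewrite /gridx -addn1 natrD mulrDl mul1r addrA. Qed.

(* dx * beta_k is a difference of consecutive ramps, so the weights telescope. *)
Lemma dx_mul_beta xl k z :
  dx * beta xl dx k z =
  ramp (z - gridx xl dx k + dx) - ramp (z - gridx xl dx k.+1 + dx).
Proof.
have -> : z - gridx xl dx k.+1 + dx = z - gridx xl dx k by rewrite gridxS; ring.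
rewrite -tent_ramp /beta.
have -> : dx - `|z - gridx xl dx k| = dx * (1 - `|z - gridx xl dx k| / dx).
  by field; exact: lt0r_neq0.
by rewrite maxr_pMr ?mulr0 // ltW.
Qed.

Lemma sum_beta_le1 xl z N : \sum_(0 <= k < N) beta xl dx k z <= 1.
Proof.
rewrite -(ler_pM2l dx_gt0) mulr1 mulr_sumr.
rewrite (telescope_sumr_eq (fun k => - ramp (z - gridx xl dx k + dx))) //;
  last by move=> k _; rewrite dx_mul_beta opprK addrC.
have := ramp_ge0 (z - gridx xl dx N + dx); have := ramp_le (z - gridx xl dx 0 + dx).
lra.
Qed.

Lemma beta_eq0 xl k z : dx <= `|z - gridx xl dx k| -> beta xl dx k z = 0.
Proof.
by move=> far; apply/max_idPl; rewrite subr_le0 ler_pdivlMr // mul1r.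
Qed.

Lemma beta_eventually_eq0 xl z :
  exists N, forall k, (N <= k)%N -> beta xl dx k z = 0.
Proof.
exists (Num.Def.archi_bound (`|z - xl| / dx + 1)) => k le_Nk.
have : `|z - xl| / dx + 1 < k%:R.
  apply: lt_le_trans (archi_boundP _) _; last by rewrite ler_nat.
  by rewrite addr_ge0 ?divr_ge0 // ltW.
rewrite -(ltr_pM2r dx_gt0) mulrDl divfK ?mul1r ?lt0r_neq0 // => far.
apply: beta_eq0; rewrite distrC.
have := ler_norm (z - xl); have := ler_norm (gridx xl dx k - z); rewrite /gridx.
lra.
Qed.

Lemma interp_sum xl (U : nat -> R) z N :
  (forall k, (N <= k)%N -> beta xl dx k z = 0) ->
  interp xl dx U z = \sum_(0 <= k < N) beta xl dx k z * U k.
Proof.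
move=> beta_tail; rewrite /interp; apply: norm_lim_near_cst.
near=> n.
have le_Nn : (N <= n)%N by near: n; exists N.
rewrite /series /= (big_cat_nat (n := N)) //= [X in _ + X]big1_seq ?addr0 //.
by move=> k /andP[_]; rewrite mem_index_iota => /andP[le_Nk _]; rewrite beta_tail ?mul0r.
Unshelve. all: end_near.
Qed.

Lemma interp_le_shift xl (U V : nat -> R) (M z : R) :
  0 <= M -> (forall k, U k <= V k + M) -> interp xl dx U z <= interp xl dx V z + M.
Proof.
move=> M_ge0 le_UV; have [N beta_tail] := beta_eventually_eq0 xl z.
rewrite !(interp_sum _ beta_tail).
apply: (@le_trans _ _ (\sum_(0 <= k < N) beta xl dx k z * (V k + M))).
  by apply: ler_sum => k _; rewrite ler_wpM2l ?beta_ge0.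
under eq_bigr do rewrite mulrDr.
rewrite big_split /= -mulr_suml lerD2l.
by rewrite ler_piMl ?sum_beta_le1.
Qed.

End HatFunctions.

Section SchemeComparison.
Variables (R : realType) (rho r gamma xl h dx y lam : R).
Hypotheses (h_gt0 : 0 < h) (dx_gt0 : 0 < dx) (rhoh_lt1 : rho * h < 1).
Hypotheses (lam_ge0 : 0 <= lam) (lamh_lt1 : lam * h < 1).

Let a := (1 - rho * h) * lam.
Let b := (1 - rho * h) * (1 - lam * h) / h.

Let a_ge0 : 0 <= a. Proof. by rewrite mulr_ge0 // subr_ge0 ltW. Qed.
Let b_ge0 : 0 <= b.
Proof. by rewrite divr_ge0 ?(ltW h_gt0) // mulr_ge0 // subr_ge0 ltW. Qed.

Definition control_sup (xi q : R) (Q : nat -> R) : \bar R :=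
  ereal_sup [set (util gamma c +
      (b * (interp xl dx Q (xi + h * (r * xi + y - c)) - q))%:E)%E
    | c in admissible xl h r y xi].

Lemma schemeFE (xi q qb : R) (Q : nat -> R) :
  schemeF rho r gamma xl h dx y lam xi q qb Q =
  ((rho * q - a * (qb - q))%:E - control_sup xi q Q)%E.
Proof. by []. Qed.

Lemma control_sup_le_shift (xi qU qV : R) (QU QV : nat -> R) (M : R) :
  0 <= M -> (forall k, QU k <= QV k + M) ->
  (control_sup xi qU QU <= control_sup xi qV QV + (b * (M - (qU - qV)))%:E)%E.
Proof.
move=> M_ge0 le_Q; apply: ge_ereal_sup => _ [c adm_c <-].
set zc := xi + h * (r * xi + y - c).
apply: (@le_trans _ _
  (util gamma c + (b * (interp xl dx QV zc - qV))%:E + (b * (M - (qU - qV)))%:E)%E).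
  rewrite -addeA -EFinD leeD2l // lee_fin -mulrDr ler_wpM2l //.
  have := interp_le_shift dx_gt0 xl zc M_ge0 le_Q; lra.
by rewrite leeD2r // ereal_sup_ubound //; exists c.
Qed.

Lemma scheme_sub_super_weighted (xi qU qUb qV qVb : R) (QU QV : nat -> R) (M : R) :
  0 <= M -> (forall k, QU k <= QV k + M) -> qUb <= qVb + M ->
  (schemeF rho r gamma xl h dx y lam xi qU qUb QU <= 0)%E ->
  (0 <= schemeF rho r gamma xl h dx y lam xi qV qVb QV)%E ->
  (rho + a + b) * (qU - qV) <= (a + b) * M.
Proof.
move=> M_ge0 le_Q le_qb; rewrite !schemeFE sube_le0 sube_ge0 ?orbT // => sub super.
have := control_sup_le_shift xi qU qV M_ge0 le_Q.
move=> /le_trans /(_ (leeD2r _ super)) /(le_trans sub).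
rewrite -EFinD lee_fin => le_q.
have := ler_wpM2l a_ge0 le_qb.
rewrite !mulrDr !mulrDl !mulrN in le_q *; lra.
Qed.

Definition comparison_rate : R := (a + b) / (rho + a + b).

Hypothesis rho_gt0 : 0 < rho.

Let weight_gt0 : 0 < rho + a + b.
Proof. by rewrite -addrA ltr_wpDr // addr_ge0. Qed.

Lemma comparison_rate_lt1 : comparison_rate < 1.
Proof. by rewrite ltr_pdivrMr // mul1r -addrA ltr_pwDl. Qed.

Lemma scheme_sub_super_le (xi qU qUb qV qVb : R) (QU QV : nat -> R) (M : R) :
  0 <= M -> (forall k, QU k <= QV k + M) -> qUb <= qVb + M ->
  (schemeF rho r gamma xl h dx y lam xi qU qUb QU <= 0)%E ->
  (0 <= schemeF rho r gamma xl h dx y lam xi qV qVb QV)%E ->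
  qU - qV <= comparison_rate * M.
Proof.
move=> M_ge0 le_Q le_qb sub super.
rewrite /comparison_rate mulrAC ler_pdivlMr // mulrC.
exact: scheme_sub_super_weighted sub super.
Qed.

End SchemeComparison.

Lemma le0_of_contraction (R : realType) (T : Type) (d : T -> R) (theta : R) :
  theta < 1 -> (exists B : R, forall t, d t <= B) ->
  (forall M : R, 0 < M -> (forall t, d t <= M) -> forall t, d t <= theta * M) ->
  forall t, d t <= 0.
Proof.
move=> theta_lt1 [B le_dB] contract t0.
have d_sup : has_sup (range d).
  by split; [exists (d t0), t0 | exists B => _ [t _ <-]; exact: le_dB].
set M := sup (range d).
have le_dM t : d t <= M by apply: sup_upper_bound => //; exists t.
have [M_le0|M_gt0] := leP M 0; first exact: le_trans (le_dM t0) M_le0.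
have : M <= theta * M.
  by apply: ge_sup; [exists (d t0), t0 | move=> _ [t _ <-]; exact: contract].
have : 0 < (1 - theta) * M by rewrite mulr_gt0 // subr_gt0.
lra.
Qed.

Lemma bounded_seq_sub_ub (R : realType) (U V : nat -> R) :
  bounded_seq U -> bounded_seq V -> exists B, forall i, U i - V i <= B.
Proof.
move=> [A le_UA] [B le_VB]; exists (A + B) => i.
apply: le_trans (ler_norm _) _; apply: le_trans (ler_normB _ _) _; exact: lerD.
Qed.

Theorem mainTheorem11 (R : realType)
  (rho r y1 y2 gamma xl lam1 lam2 h dx : R)
  (Hrho : 0 < rho) (Hr : r < rho) (Hy1 : 0 < y1) (Hy12 : y1 < y2)
  (Hgamma : 1 < gamma) (Hxl : xl <= 0)
  (Hxy1 : 0 < rho * xl + y1) (Hxy2 : 0 < rho * xl + y2)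
  (Hlam1 : 0 <= lam1) (Hlam2 : 0 <= lam2)
  (Hh : 0 < h) (Hdx : 0 < dx) (Hrhoh : rho * h < 1)
  (Hlam1h : lam1 * h < 1) (Hlam2h : lam2 * h < 1)
  (U1 U2 V1 V2 : nat -> R)
  (HU1b : bounded_seq U1) (HU2b : bounded_seq U2)
  (HV1b : bounded_seq V1) (HV2b : bounded_seq V2)
  (HU1 : forall i : nat,
     (schemeF rho r gamma xl h dx y1 lam1 (gridx xl dx i) (U1 i) (U2 i) U1 <= 0)%E)
  (HU2 : forall i : nat,
     (schemeF rho r gamma xl h dx y2 lam2 (gridx xl dx i) (U2 i) (U1 i) U2 <= 0)%E)
  (HV1 : forall i : nat,
     (0 <= schemeF rho r gamma xl h dx y1 lam1 (gridx xl dx i) (V1 i) (V2 i) V1)%E)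
  (HV2 : forall i : nat,
     (0 <= schemeF rho r gamma xl h dx y2 lam2 (gridx xl dx i) (V2 i) (V1 i) V2)%E) :
  forall i : nat, U1 i <= V1 i /\ U2 i <= V2 i.
Proof.
pose d (t : nat * bool) := if t.2 then U1 t.1 - V1 t.1 else U2 t.1 - V2 t.1.
pose theta := Num.max (comparison_rate rho h lam1) (comparison_rate rho h lam2).
suff d_le0 : forall t, d t <= 0.
  by move=> i; split; rewrite -subr_le0; [apply: (d_le0 (i, true)) | apply: (d_le0 (i, false))].
apply: (@le0_of_contraction _ _ d theta).
- by rewrite gt_max !comparison_rate_lt1.
- have [B1 le_B1] := bounded_seq_sub_ub HU1b HV1b.
  have [B2 le_B2] := bounded_seq_sub_ub HU2b HV2b.
  by exists (Num.max B1 B2) => -[i []]; rewrite le_max ?le_B1 ?le_B2 ?orbT.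
move=> M M_gt0 le_dM t.
have le_U1 k : U1 k <= V1 k + M by have := le_dM (k, true); rewrite /d /=; lra.
have le_U2 k : U2 k <= V2 k + M by have := le_dM (k, false); rewrite /d /=; lra.
have M_ge0 := ltW M_gt0.
have le_rate1 : comparison_rate rho h lam1 * M <= theta * M.
  by rewrite ler_wpM2r // le_max lexx.
have le_rate2 : comparison_rate rho h lam2 * M <= theta * M.
  by rewrite ler_wpM2r // le_max lexx orbT.
case: t => i []; rewrite /d /=.
- apply: le_trans le_rate1.
  exact: (scheme_sub_super_le Hh Hdx Hrhoh Hlam1 Hlam1h Hrho
           M_ge0 le_U1 (le_U2 i) (HU1 i) (HV1 i)).
- apply: le_trans le_rate2.
  exact: (scheme_sub_super_le Hh Hdx Hrhoh Hlam2 Hlam2h Hrho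
           M_ge0 le_U2 (le_U1 i) (HU2 i) (HV2 i)).
Qed.
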